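(* Every $5$-dimensional Acaa-algebra over a field $\mathbb K$ of characteristic $0$ is isomorphic to one of the following algebras, each given in a basis $\{e_1,\dots,e_5\}$ with all brackets of basis vectors not listed (and not determined by anticommutativity) equal to zero: (1) the $5$-dimensional abelian algebra; (2) $\mathcal H_3\oplus\mathbb K^2$: $[e_1,e_2]=e_3$; (3) the $2$-step nilpotent Lie algebra $[e_1,e_2]=e_3$, $[e_1,e_4]=e_5$; (4) the $5$-dimensional Heisenberg Lie algebra $\mathcal H_5$: $[e_1,e_2]=e_5$, $[e_3,e_4]=e_5$.
   Context: An Acaa-algebra over a field $\mathbb K$ of characteristic $0$ is a $\mathbb K$-vector space $A$ with a bilinear product $[\cdot,\cdot]$ which is anticommutative, $[x,y]=-[y,x]$, and satisfies $[x_1,[x_2,x_3]]=[x_2,[x_3,x_1]]$ for all $x_1,x_2,x_3\in A$. Isomorphism means a linear bijection preserving the bracket. *)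

From HB Require Import structures.
From mathcomp Require Import all_boot all_order all_algebra.
Set Implicit Arguments. Unset Strict Implicit. Unset Printing Implicit Defensive.
Import GRing.Theory.
Local Open Scope ring_scope.

Definition bilinear_br (K : fieldType) (V : lmodType K) (br : V -> V -> V) :=
  (forall (a : K) (x y z : V), br (a *: x + y) z = a *: br x z + br y z) /\
  (forall (a : K) (x y z : V), br x (a *: y + z) = a *: br x y + br x z).

Definition is_acaa (K : fieldType) (V : lmodType K) (br : V -> V -> V) :=
  [/\ bilinear_br br,
      (forall x y : V, br x y = - br y x) &
      (forall x1 x2 x3 : V, br x1 (br x2 x3) = br x2 (br x3 x1))].

Definition acaa_iso (K : fieldType) (V W : lmodType K)
    (brV : V -> V -> V) (brW : W -> W -> W) (f : V -> W) :=
  [/\ (forall (a : K) (x y : V), f (a *: x + y) = a *: f x + f y),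
      bijective f &
      (forall x y : V, f (brV x y) = brW (f x) (f y))].

(* The model algebras on K^5 = 'rV[K]_5, with basis e_1..e_5 = delta_mx 0 i
   (indices shifted: e_(k+1) is the ordinal k). *)
Definition br_of_table (K : fieldType) (c : 'I_5 -> 'I_5 -> 'rV[K]_5)
    (u v : 'rV[K]_5) : 'rV[K]_5 :=
  \sum_(i < 5) \sum_(j < 5) (u 0 i * v 0 j) *: c i j.

Definition e (K : fieldType) (k : nat) : 'rV[K]_5 := delta_mx 0 (inord k.-1).

Definition idx (i : 'I_5) : nat := (i : nat).+1.

Definition tab_abelian (K : fieldType) : 'I_5 -> 'I_5 -> 'rV[K]_5 :=
  fun _ _ => 0.

Definition tab_H3K2 (K : fieldType) : 'I_5 -> 'I_5 -> 'rV[K]_5 :=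
  fun i j =>
    if (idx i == 1%N) && (idx j == 2%N) then e K 3
    else if (idx i == 2%N) && (idx j == 1%N) then - e K 3
    else 0.

Definition tab_N52 (K : fieldType) : 'I_5 -> 'I_5 -> 'rV[K]_5 :=
  fun i j =>
    if (idx i == 1%N) && (idx j == 2%N) then e K 3
    else if (idx i == 2%N) && (idx j == 1%N) then - e K 3
    else if (idx i == 1%N) && (idx j == 4%N) then e K 5
    else if (idx i == 4%N) && (idx j == 1%N) then - e K 5
    else 0.

Definition tab_H5 (K : fieldType) : 'I_5 -> 'I_5 -> 'rV[K]_5 :=
  fun i j =>
    if (idx i == 1%N) && (idx j == 2%N) then e K 5
    else if (idx i == 2%N) && (idx j == 1%N) then - e K 5
    else if (idx i == 3%N) && (idx j == 4%N) then e K 5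
    else if (idx i == 4%N) && (idx j == 3%N) then - e K 5
    else 0.

From HB Require Import structures.
From mathcomp Require Import all_boot all_order all_algebra.
From Stdlib Require Import Classical.
Set Implicit Arguments. Unset Strict Implicit. Unset Printing Implicit Defensive.
Import GRing.Theory.
Local Open Scope ring_scope.

(* Anticommutativity, the identity [x1,[x2,x3]] = [x2,[x3,x1]] and 2 != 0 give
   [x,x] = 0, [x,[x,z]] = 0 and [[x,y],[z,w]] = 0.  If u = [x,[y,z]] were nonzero,
   then also u = [y,[z,x]] = [z,[x,y]], and bracketing a linear relation among
   x, y, z, [y,z], [z,x], [x,y] on the right with [y,z], [z,x], [x,y], then on the
   left with x, y, z, kills all six coefficients: six independent vectors in
   dimension 5.  So the algebra is alternating with [x,[y,z]] = 0, and such
   algebras of dimension 5 are classified by the rank of the maps [a,-].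
   If [a,b], [a,c] are independent, [b,c] is a combination l[a,b] + m[a,c] (else
   a, b, c and their brackets are again six independent vectors), and
   a, b - m a, [a,b], c + l a, [a,c] is a basis with [e1,e2] = e3, [e1,e4] = e5
   and all other brackets zero.  Otherwise, given w = [x1,x2] != 0, any vector
   can be shifted by a combination of x1, x2 into the common centralizer of x1
   and x2, on which all brackets are multiples g w; completing x1, x2, w by two
   such vectors z, y gives H3 + K^2 if [z,y] = 0 and H5 (after rescaling z)
   otherwise. *)

Lemma scaler_eq0_coef (K : fieldType) (V : lmodType K) (c : K) (v : V) :
  v != 0 -> c *: v = 0 -> c = 0.
Proof. by move=> v0 /eqP; rewrite scaler_eq0 (negbTE v0) orbF => /eqP. Qed.

Section FreeFamilies.
Variables (K : fieldType) (V : vectType K).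

Lemma free_leq_dim (s : seq V) : free s -> (size s <= \dim (fullv : {vspace V}))%N.
Proof. by move/eqnP <-; apply/dimvS/subvf. Qed.

Lemma basis_of_free (s : seq V) :
  free s -> (\dim (fullv : {vspace V}) <= size s)%N -> basis_of fullv s.
Proof. by move=> fs le_dim; rewrite basisEfree fs subvf. Qed.

Lemma exists_basis_tuple n :
  \dim (fullv : {vspace V}) = n -> exists X : n.-tuple V, basis_of fullv X.
Proof. by move<-; exists (vbasis fullv); apply: vbasisP. Qed.

Lemma free_extend (s : seq V) :
  free s -> (size s < \dim (fullv : {vspace V}))%N -> exists v, free (v :: s).
Proof.
move=> fs lt_dim; have [/allP sp | ] := boolP (all (mem <<s>>%VS) (vbasis fullv)).
  have /dimvS : (fullv <= <<s>>)%VS.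
    by rewrite -(span_basis (vbasisP fullv)); apply/span_subvP => v /sp.
  by rewrite (eqnP fs) leqNgt lt_dim.
by rewrite -has_predC => /hasP [v _ /= nv]; exists v; rewrite free_cons nv fs.
Qed.

Lemma free_cons_addr (v t : V) (s : seq V) :
  t \in <<s>>%VS -> free (v :: s) -> free (v + t :: s).
Proof.
move=> ts; rewrite !free_cons => /andP [vs ->]; rewrite andbT.
by apply: contra vs => vts; rewrite -(addrK t v) memvB.
Qed.

Lemma free_cons_scale (c : K) (v : V) (s : seq V) :
  c != 0 -> free (v :: s) -> free (c *: v :: s).
Proof.
move=> c0; rewrite !free_cons => /andP [vs ->]; rewrite andbT.
by apply: contra vs => cvs; rewrite -(scalerK c0 v) memvZ.
Qed.

Lemma nonfree_pair_line (p q : V) :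
  q != 0 -> ~~ free [:: p; q] -> exists k, p = k *: q.
Proof. by move=> q0; rewrite free_cons seq1_free q0 andbT negbK span_seq1 => /vlineP. Qed.

Lemma free2E (p q : V) (a b : K) :
  free [:: p; q] -> a *: p + b *: q = 0 -> a = 0 /\ b = 0.
Proof.
move=> /(@freeP _ _ _ (in_tuple [:: p; q])) fr E.
have := fr (fun i => [:: a; b]`_i); rewrite /= !big_ord_recl big_ord0 /= addr0.
by move/(_ E) => k0; split; [apply: (k0 ord0) | apply: (k0 (@Ordinal 2 1 isT))].
Qed.

Lemma free3I (v1 v2 v3 : V) :
  (forall c1 c2 c3 : K, c1 *: v1 + c2 *: v2 + c3 *: v3 = 0 ->
     [/\ c1 = 0, c2 = 0 & c3 = 0]) ->
  free [:: v1; v2; v3].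
Proof.
move=> coef0; apply/(@freeP _ _ _ (in_tuple [:: v1; v2; v3])) => k.
rewrite /= !big_ord_recl big_ord0 /= addr0 !addrA => /coef0 [? ? ?].
case=> [[|[|[|?]]] ?] //=; match goal with
  _ : k ?j = 0 |- k ?i = 0 => by rewrite (_ : i = j) //; apply: val_inj end.
Qed.

Lemma free5I (v1 v2 v3 v4 v5 : V) :
  (forall c1 c2 c3 c4 c5 : K,
     c1 *: v1 + c2 *: v2 + c3 *: v3 + c4 *: v4 + c5 *: v5 = 0 ->
     [/\ c1 = 0, c2 = 0, c3 = 0, c4 = 0 & c5 = 0]) ->
  free [:: v1; v2; v3; v4; v5].
Proof.
move=> coef0; apply/(@freeP _ _ _ (in_tuple [:: v1; v2; v3; v4; v5])) => k.
rewrite /= !big_ord_recl big_ord0 /= addr0 !addrA => /coef0 [? ? ? ? ?].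
case=> [[|[|[|[|[|?]]]]] ?] //=; match goal with
  _ : k ?j = 0 |- k ?i = 0 => by rewrite (_ : i = j) //; apply: val_inj end.
Qed.

Lemma free6I (v1 v2 v3 v4 v5 v6 : V) :
  (forall c1 c2 c3 c4 c5 c6 : K,
     c1 *: v1 + c2 *: v2 + c3 *: v3 + c4 *: v4 + c5 *: v5 + c6 *: v6 = 0 ->
     [/\ c1 = 0, c2 = 0, c3 = 0, c4 = 0 & c5 = 0] /\ c6 = 0) ->
  free [:: v1; v2; v3; v4; v5; v6].
Proof.
move=> coef0; apply/(@freeP _ _ _ (in_tuple [:: v1; v2; v3; v4; v5; v6])) => k.
rewrite /= !big_ord_recl big_ord0 /= addr0 !addrA => /coef0 [[? ? ? ? ?] ?].
case=> [[|[|[|[|[|[|?]]]]]] ?] //=; match goal with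
  _ : k ?j = 0 |- k ?i = 0 => by rewrite (_ : i = j) //; apply: val_inj end.
Qed.

End FreeFamilies.

Section AcaaIdentities.
Variables (K : fieldType) (V : lmodType K) (br : {bilinear V -> V -> V}).
Hypotheses (two_neq0 : (2%:R : K) != 0) (br_anti : forall x y, br x y = - br y x)
  (br_cycle : forall x y z, br x (br y z) = br y (br z x)).

Let eq_opp0 (v : V) : v = - v -> v = 0.
Proof.
move=> vN; have /eqP : (2%:R : K) *: v = 0 by rewrite scaler_nat mulr2n {2}vN subrr.
by rewrite scaler_eq0 (negbTE two_neq0) => /eqP.
Qed.

Lemma br_self x : br x x = 0.
Proof. exact/eq_opp0/br_anti. Qed.

Lemma br_self_r x z : br x (br x z) = 0.
Proof. by apply: eq_opp0; rewrite {1}br_cycle [br z x]br_anti linearNr. Qed.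

Lemma br_self_l x z : br z (br x z) = 0.
Proof. by rewrite [br x z]br_anti linearNr br_self_r oppr0. Qed.

Lemma br_brbr x y z w : br (br x y) (br z w) = 0.
Proof.
apply: eq_opp0.
rewrite {1}br_cycle [br w _]br_cycle br_cycle [br (br y w) z]br_anti [br z (br y w)]br_cycle.
by rewrite [br w z]br_anti !linearNr opprK br_cycle br_cycle br_anti.
Qed.

End AcaaIdentities.

Section DimAtMost5.
Variables (K : fieldType) (V : vectType K) (br : {bilinear V -> V -> V}).
Hypotheses (two_neq0 : (2%:R : K) != 0) (br_anti : forall x y, br x y = - br y x)
  (br_cycle : forall x y z, br x (br y z) = br y (br z x)).
Hypothesis dim_le5 : (\dim (fullv : {vspace V}) <= 5)%N.

Lemma br_nilpotent x y z : br x (br y z) = 0.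
Proof.
have self_r := br_self_r two_neq0 br_anti br_cycle.
have self_l := br_self_l two_neq0 br_anti br_cycle.
have brbr := br_brbr two_neq0 br_anti br_cycle.
apply/eqP; apply: contraT => u0.
have yzx : br y (br z x) = br x (br y z) by rewrite [RHS]br_cycle.
have zxy : br z (br x y) = br x (br y z) by rewrite [RHS]br_cycle [RHS]br_cycle.
suff /free_leq_dim : free [:: x; y; z; br y z; br z x; br x y].
  by move/leq_trans/(_ dim_le5).
apply: free6I => k1 k2 k3 k4 k5 k6 E.
have [k10 k20 k30] : [/\ k1 = 0, k2 = 0 & k3 = 0].
  move: (congr1 (br^~ (br y z)) E) (congr1 (br^~ (br z x)) E) (congr1 (br^~ (br x y)) E).
  rewrite /= !linearDl !linearZl_LR !linear0l !brbr !self_r !self_l yzx zxy.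
  rewrite !scaler0 ?addr0 ?add0r.
  by move=> /(scaler_eq0_coef u0) -> /(scaler_eq0_coef u0) -> /(scaler_eq0_coef u0) ->.
subst k1 k2 k3; move: E; rewrite !scale0r !add0r => E.
move: (congr1 (br x) E) (congr1 (br y) E) (congr1 (br z) E).
rewrite !linearDr !linearZr_LR !linear0r !self_r !self_l yzx zxy !scaler0 ?addr0 ?add0r.
by move=> /(scaler_eq0_coef u0) -> /(scaler_eq0_coef u0) -> /(scaler_eq0_coef u0) ->.
Qed.

End DimAtMost5.

Section Coordinates.
Variables (K : fieldType) (V : vectType K) (n : nat) (X : n.-tuple V).

Definition lincomb (c : 'rV[K]_n) : V := \sum_i c 0 i *: X`_i.

Lemma lincomb_is_linear : linear lincomb.
Proof.
move=> a c d; rewrite scaler_sumr -big_split; apply: eq_bigr => i _.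
by rewrite !mxE scalerDl scalerA.
Qed.
HB.instance Definition _ := GRing.isSemilinear.Build K _ _ _ lincomb
  (GRing.semilinear_linear lincomb_is_linear).

Definition coords (v : V) : 'rV[K]_n := \row_i coord X i v.

Lemma lincomb_delta i : lincomb (delta_mx 0 i) = X`_i.
Proof.
rewrite /lincomb (bigD1 i) //= mxE !eqxx scale1r big1 ?addr0 // => j ji.
by rewrite mxE (negbTE ji) andbF scale0r.
Qed.

Hypothesis X_basis : basis_of fullv X.

Lemma coordsK : cancel coords lincomb.
Proof.
move=> v; rewrite [v in RHS](coord_basis X_basis) ?memvf //.
by apply: eq_bigr => i _; rewrite mxE.
Qed.

Lemma lincombK : cancel lincomb coords.
Proof.
by move=> c; apply/rowP => i; rewrite mxE coord_sum_free ?(basis_free X_basis).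
Qed.

End Coordinates.

Section TableIsomorphism.
Variables (K : fieldType) (V : vectType K) (br : {bilinear V -> V -> V}).
Variables (X : 5.-tuple V) (tab : 'I_5 -> 'I_5 -> 'rV[K]_5).
Hypotheses (X_basis : basis_of fullv X)
  (X_tab : forall i j, lincomb X (tab i j) = br X`_i X`_j).

Lemma lincomb_e k : (k < 5)%N -> lincomb X (e K k.+1) = X`_k.
Proof. by move=> lt_k5; rewrite /e lincomb_delta inordK. Qed.

Lemma lincomb_br_of_table c d :
  lincomb X (br_of_table tab c d) = br (lincomb X c) (lincomb X d).
Proof.
rewrite linear_sum linear_sumlz; apply: eq_bigr => i _.
rewrite linear_sum linearZl_LR linear_sumr scaler_sumr; apply: eq_bigr => j _.
by rewrite linearZ linearZr_LR -X_tab scalerA.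
Qed.

Lemma br_of_table_iso : acaa_iso br (br_of_table tab) (coords X).
Proof.
have lincomb_inj := can_inj (lincombK X_basis); have coordsK := coordsK X_basis.
split.
- by move=> a x y; apply: lincomb_inj; rewrite linearP /= !coordsK.
- by exists (lincomb X); [apply: coordsK | apply: lincombK].
- by move=> x y; apply: lincomb_inj; rewrite lincomb_br_of_table !coordsK.
Qed.

End TableIsomorphism.

Section TwoStepNilpotent.
Variables (K : fieldType) (V : vectType K) (br : {bilinear V -> V -> V}).
Hypotheses (br_alt : forall x, br x x = 0) (br_nil : forall x y z, br x (br y z) = 0).
Hypothesis dim5 : \dim (fullv : {vspace V}) = 5%N.

Lemma br_anti x y : br x y = - br y x.
Proof.
apply/eqP; rewrite -subr_eq0 opprK; apply/eqP.
by have := br_alt (x + y); rewrite !linearDl !linearDr !br_alt add0r addr0.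
Qed.

Lemma br_central x y z : br (br y z) x = 0.
Proof. by rewrite br_anti br_nil oppr0. Qed.

Lemma free5_basis (X : 5.-tuple V) : free X -> basis_of fullv X.
Proof. by move=> fX; rewrite basis_of_free // size_tuple dim5. Qed.

Lemma abelian_iso : (forall x y, br x y = 0) ->
  exists f, acaa_iso br (br_of_table (tab_abelian K)) f.
Proof.
move=> ab; have [X XB] := exists_basis_tuple dim5.
by exists (coords X); apply: br_of_table_iso XB _ => i j; rewrite /tab_abelian linear0 ab.
Qed.

Lemma br_span_of_free_pair a b c : free [:: br a b; br a c] ->
  exists l m, br b c = l *: br a b + m *: br a c.
Proof.
move=> fr; have ba0 : br b a != 0.
  by rewrite br_anti oppr_eq0 (free_not0 fr) ?mem_head.
apply: NNPP => nspan.
suff /free_leq_dim : free [:: a; b; c; br a b; br a c; br b c] by rewrite dim5.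
apply: free6I => k1 k2 k3 k4 k5 k6 E.
have [k20 k30] : k2 = 0 /\ k3 = 0.
  apply: (free2E fr); move: (congr1 (br a) E).
  by rewrite !linearDr !linearZr_LR linear0r br_alt !br_nil !scaler0 add0r !addr0.
have k10 : k1 = 0.
  apply: (scaler_eq0_coef ba0); move: (congr1 (br b) E).
  by rewrite k20 k30 !linearDr !linearZr_LR linear0r !br_nil !scale0r !scaler0 !addr0.
subst k1 k2 k3; move: E; rewrite !scale0r !add0r => E.
have k60 : k6 = 0.
  apply/eqP; apply: contraT => k6n; exfalso; apply: nspan.
  exists (- (k6^-1 * k4)), (- (k6^-1 * k5)).
  have /eqP : k6 *: br b c + (k4 *: br a b + k5 *: br a c) = 0 by rewrite addrC.
  rewrite addr_eq0 => /eqP /(congr1 ( *:%R k6^-1)); rewrite scalerK // => ->.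
  by rewrite scalerN scalerDr !scalerA opprD -!scaleNr.
by move: E; rewrite k60 scale0r addr0 => /(free2E fr) [-> ->].
Qed.

Lemma N52_iso_of_commuting a b c :
  free [:: br a b; br a c] -> br b c = 0 ->
  exists f, acaa_iso br (br_of_table (tab_N52 K)) f.
Proof.
move=> fr bc0; have ba0 : br b a != 0.
  by rewrite br_anti oppr_eq0 (free_not0 fr) ?mem_head.
have ba : br b a = - br a b by rewrite br_anti.
have ca : br c a = - br a c by rewrite br_anti.
have cb0 : br c b = 0 by rewrite br_anti bc0 oppr0.
pose X := [tuple a; b; br a b; c; br a c].
have XB : basis_of fullv X.
  apply/free5_basis/free5I => k1 k2 k3 k4 k5 E.
  have [k20 k40] : k2 = 0 /\ k4 = 0.
    apply: (free2E fr); move: (congr1 (br a) E).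
    by rewrite !linearDr !linearZr_LR linear0r br_alt !br_nil !scaler0 add0r !addr0.
  have k10 : k1 = 0.
    apply: (scaler_eq0_coef ba0); move: (congr1 (br b) E).
    by rewrite k20 k40 !linearDr !linearZr_LR linear0r !br_nil !scale0r !scaler0 !addr0.
  subst k1 k2 k4; move: E; rewrite !scale0r !add0r addr0.
  by move=> /(free2E fr) [-> ->].
exists (coords X); apply: br_of_table_iso XB _ => i j.
case: i => [[|[|[|[|[|?]]]]] ?] //; case: j => [[|[|[|[|[|?]]]]] ?] //;
  rewrite /tab_N52 /= ?linear0 ?linearN /= ?lincomb_e //=;
  rewrite ?br_alt ?br_nil ?br_central ?ba ?ca ?bc0 ?cb0 //.
Qed.

Lemma N52_iso a b c : free [:: br a b; br a c] ->
  exists f, acaa_iso br (br_of_table (tab_N52 K)) f.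
Proof.
move=> fr; have [l [m bc]] := br_span_of_free_pair fr.
pose b' := b - m *: a; pose c' := c + l *: a.
have ab' : br a b' = br a b by rewrite linearBr linearZr_LR br_alt scaler0 subr0.
have ac' : br a c' = br a c by rewrite linearDr linearZr_LR br_alt scaler0 addr0.
apply: (@N52_iso_of_commuting a b' c'); first by rewrite ab' ac'.
rewrite linearBl !linearDr !linearZl_LR !linearZr_LR br_alt bc [br b a]br_anti.
by rewrite !scaler0 addr0 scalerN addrAC addrK subrr.
Qed.

Section RankOne.
Variables (x1 x2 : V).
Hypotheses (w0 : br x1 x2 != 0) (rank1 : forall a b c, ~~ free [:: br a b; br a c]).
Local Notation w := (br x1 x2).

Let w21 : br x2 x1 = - w.
Proof. by rewrite br_anti. Qed.

Let w21_0 : br x2 x1 != 0.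
Proof. by rewrite w21 oppr_eq0. Qed.

Lemma rank1_line a b c : br a c != 0 -> exists k, br a b = k *: br a c.
Proof. by move=> ac0; apply: nonfree_pair_line ac0 (rank1 a b c). Qed.

Lemma br_centralizer v u : br x1 v = 0 -> br x2 v = 0 -> br x1 u = 0 ->
  exists g, br v u = g *: w.
Proof.
move=> x1v x2v x1u; have vx2 : br v x2 = 0 by rewrite br_anti x2v oppr0.
have x1v_x2 : br (x1 + v) x2 != 0 by rewrite linearDl vx2 addr0.
have [g] := rank1_line u x1v_x2.
by rewrite !linearDl x1u vx2 add0r addr0 => vu; exists g.
Qed.

Lemma free_extend_centralizer s : free s -> (size s < 5)%N -> x1 \in s -> x2 \in s ->
  exists2 y, free (y :: s) & br x1 y = 0 /\ br x2 y = 0.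
Proof.
move=> fs lt_s5 x1s x2s.
have [v fv] : exists v, free (v :: s) by apply: (free_extend fs); rewrite dim5.
have [k1 vk1] := rank1_line v w0; have [k2 vk2] := rank1_line v w21_0.
exists (v + ((- k2) *: x1 + (- k1) *: x2)).
  by apply: free_cons_addr fv; rewrite memvD // memvZ // memv_span.
by rewrite !linearDr !linearZr_LR !br_alt vk1 vk2 !scaler0 add0r addr0 !scaleNr !subrr.
Qed.

Lemma free_x1x2w : free [:: x1; x2; w].
Proof.
apply: free3I => k1 k2 k3 E.
have k20 : k2 = 0.
  apply: (scaler_eq0_coef w0); move: (congr1 (br x1) E).
  by rewrite !linearDr !linearZr_LR linear0r br_alt br_nil !scaler0 add0r addr0.
have k10 : k1 = 0.
  apply: (scaler_eq0_coef w21_0); move: (congr1 (br x2) E).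
  by rewrite !linearDr !linearZr_LR linear0r br_alt br_nil !scaler0 !addr0.
by subst k1 k2; move: E; rewrite !scale0r !add0r => /(scaler_eq0_coef w0) ->.
Qed.

Lemma H3K2_or_H5_iso :
  exists f, acaa_iso br (br_of_table (tab_H3K2 K)) f \/
            acaa_iso br (br_of_table (tab_H5 K)) f.
Proof.
have [y fy [x1y x2y]] : exists2 y, free [:: y; x1; x2; w] & br x1 y = 0 /\ br x2 y = 0.
  by apply: free_extend_centralizer free_x1x2w _ _ _; rewrite ?inE ?eqxx ?orbT.
have [z fz [x1z x2z]] : exists2 z, free [:: z; y; x1; x2; w] & br x1 z = 0 /\ br x2 z = 0.
  by apply: free_extend_centralizer fy _ _ _; rewrite ?inE ?eqxx ?orbT.
have [y1 y2] : br y x1 = 0 /\ br y x2 = 0 by split; rewrite br_anti ?x1y ?x2y oppr0.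
have [z1 z2] : br z x1 = 0 /\ br z x2 = 0 by split; rewrite br_anti ?x1z ?x2z oppr0.
have [g zy] := br_centralizer x1z x2z x1y.
have [g0 | g_neq0] := eqVneq g 0.
  have zy0 : br z y = 0 by rewrite zy g0 scale0r.
  have yz0 : br y z = 0 by rewrite br_anti zy0 oppr0.
  pose X := [tuple x1; x2; w; z; y].
  have XB : basis_of fullv X.
    exact/free5_basis/(etrans (perm_free (permEl (perm_catC [:: x1; x2; w] [:: z; y]))) fz).
  exists (coords X); left; apply: br_of_table_iso XB _ => i j.
  case: i => [[|[|[|[|[|?]]]]] ?] //; case: j => [[|[|[|[|[|?]]]]] ?] //;
    rewrite /tab_H3K2 /= ?linear0 ?linearN /= ?lincomb_e //=;
    rewrite ?br_alt ?br_nil ?br_central ?w21 ?x1y ?x2y ?x1z ?x2z ?y1 ?y2 ?z1 ?z2 ?zy0 ?yz0 //.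
pose u := g^-1 *: z.
have uy : br u y = w by rewrite linearZl_LR zy scalerA mulVf // scale1r.
have yu : br y u = - w by rewrite br_anti uy.
have [x1u x2u] : br x1 u = 0 /\ br x2 u = 0 by rewrite !linearZr_LR x1z x2z scaler0.
have [u1 u2] : br u x1 = 0 /\ br u x2 = 0 by rewrite !linearZl_LR z1 z2 scaler0.
pose X := [tuple u; y; x1; x2; w].
have XB : basis_of fullv X by apply/free5_basis/free_cons_scale; rewrite ?invr_eq0.
exists (coords X); right; apply: br_of_table_iso XB _ => i j.
case: i => [[|[|[|[|[|?]]]]] ?] //; case: j => [[|[|[|[|[|?]]]]] ?] //;
  rewrite /tab_H5 /= ?linear0 ?linearN /= ?lincomb_e //=;
  rewrite ?br_alt ?br_nil ?br_central ?w21 ?uy ?yu ?x1y ?x2y ?y1 ?y2 ?x1u ?x2u ?u1 ?u2 //.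
Qed.

End RankOne.

Lemma two_step_classification :
  exists f : V -> 'rV[K]_5,
    acaa_iso br (br_of_table (tab_abelian K)) f \/
    acaa_iso br (br_of_table (tab_H3K2 K)) f \/
    acaa_iso br (br_of_table (tab_N52 K)) f \/
    acaa_iso br (br_of_table (tab_H5 K)) f.
Proof.
have [[a [b [c fr]]] | rank2] := classic (exists a b c, free [:: br a b; br a c]).
  by have [f iso] := N52_iso fr; exists f; do 2 right; left.
have [[x1 [x2 w0]] | abelian] := classic (exists x1 x2, br x1 x2 != 0).
  have rank1 a b c : ~~ free [:: br a b; br a c].
    by apply/negP => fr; apply: rank2; exists a, b, c.
  by have [f [iso | iso]] := H3K2_or_H5_iso w0 rank1; exists f; [right; left | do 3 right].
have [f iso] : exists f, acaa_iso br (br_of_table (tab_abelian K)) f.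
  apply: abelian_iso => x y; apply/eqP/contraT => xy.
  by exfalso; apply: abelian; exists x, y.
by exists f; left.
Qed.

End TwoStepNilpotent.

Definition bilinear_of (K : fieldType) (V : lmodType K) (br : V -> V -> V)
    (br_bilinear : bilinear_br br) : {bilinear V -> V -> V} :=
  HB.pack br (bilinear_isBilinear.Build K V V V *:%R *:%R br
    ((fun z a x y => br_bilinear.1 a x y z), (fun x a y z => br_bilinear.2 a x y z))).

Theorem mainTheorem5 (K : fieldType) (V : vectType K) (br : V -> V -> V) :
  [pchar K] =i pred0 ->
  \dim (fullv : {vspace V}) = 5%N ->
  is_acaa br ->
  exists f : V -> 'rV[K]_5,
    acaa_iso br (br_of_table (tab_abelian K)) f \/
    acaa_iso br (br_of_table (tab_H3K2 K)) f \/
    acaa_iso br (br_of_table (tab_N52 K)) f \/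
    acaa_iso br (br_of_table (tab_H5 K)) f.
Proof.
move=> char0 dim5 [br_bilinear br_anti br_cycle].
have two_neq0 : (2%:R : K) != 0 by rewrite (pcharf0P K).1.
pose brb := bilinear_of br_bilinear.
have br_alt : forall x, brb x x = 0 := br_self (br := brb) two_neq0 br_anti.
have br_nil : forall x y z, brb x (brb y z) = 0.
  exact: (br_nilpotent (br := brb) two_neq0 br_anti br_cycle (eq_leq dim5)).
exact: two_step_classification br_alt br_nil dim5.
Qed.
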